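(* Let $\mathcal{D}=(\Omega,\mathcal{B})$ be a supersimple $2$-$(n,4,\lambda)$ design such that $(\Omega,\mathcal{C})$ is a regular two-graph, where $\mathcal{C}$ is the set of collinear triples of $\mathcal{D}$. Then $n=6\lambda-2s$, where $s$ is the number of coherent $4$-subsets of $\Omega$ containing a given element of $\mathcal{C}$ (this number being independent of the element). In particular, $n$ is even.
   Context: A $2$-$(n,4,\lambda)$ design $(\Omega,\mathcal{B})$: $n$ points, a multiset of $4$-subsets (lines), every $2$-subset in exactly $\lambda$ lines; supersimple: distinct lines meet in at most two points. Collinear triple: $3$-subset contained in a line. A $2$-$(n,3,\mu)$ design $(\Omega,\mathcal{C})$ is a regular two-graph if every $4$-subset of $\Omega$ contains exactly $0,2$ or $4$ members of $\mathcal{C}$. A subset $X\subseteq\Omega$ is coherent if every $3$-subset of $X$ lies in $\mathcal{C}$. *)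

From mathcomp Require Import all_boot.
Set Implicit Arguments. Unset Strict Implicit. Unset Printing Implicit Defensive.

Section Designs.
Variable T : finType.

(* A 2-(n,k,lam) design on the point set T (n = #|T|): the lines form a
   multiset, represented as a sequence of subsets; each line has k points and
   every 2-subset lies in exactly lam lines (counted with multiplicity). *)
Definition two_design (k lam : nat) (B : seq {set T}) : Prop :=
  all (fun b : {set T} => #|b| == k) B /\
  forall P : {set T}, #|P| = 2 -> count (fun b : {set T} => P \subset b) B = lam.

(* Supersimple: distinct lines (distinct members of the multiset, i.e.
   distinct positions in B) meet in at most two points. *)
Definition supersimple (B : seq {set T}) : Prop :=
  forall i j, i < size B -> j < size B -> i != j ->
    #|nth set0 B i :&: nth set0 B j| <= 2.

Definition collinear_triples (B : seq {set T}) : {set {set T}} :=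
  [set X : {set T} | (#|X| == 3) && has (fun b : {set T} => X \subset b) B].

Definition triple_design (C : {set {set T}}) : Prop :=
  (forall X, X \in C -> #|X| = 3) /\
  exists mu, forall P : {set T}, #|P| = 2 -> #|[set X in C | P \subset X]| = mu.

Definition regular_two_graph (C : {set {set T}}) : Prop :=
  triple_design C /\
  forall Y : {set T}, #|Y| = 4 -> #|[set X in C | X \subset Y]| \in [:: 0; 2; 4].

Definition coherent (C : {set {set T}}) (X : {set T}) : bool :=
  [forall Z : {set T}, ((Z \subset X) && (#|Z| == 3)) ==> (Z \in C)].

Definition n_coherent4 (C : {set {set T}}) (c : {set T}) : nat :=
  #|[set X : {set T} | [&& #|X| == 4, c \subset X & coherent C X]]|.

End Designs.

From mathcomp Require Import all_boot.
From mathcomp Require Import zify.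
Set Implicit Arguments. Unset Strict Implicit. Unset Printing Implicit Defensive.

(* By supersimplicity the lam lines through a pair P are pairwise disjoint
   off P, so exactly 2 lam points extend P to a collinear triple.  Fix a
   collinear triple c and, for u outside c, let f(u) be the number of
   collinear triples in the 4-set u + c.  Since c itself is counted, the
   two-graph condition forces f(u) in {2, 4}, with f(u) = 4 iff u + c is
   coherent, so the sum of f over the n - 3 points outside c is
   2 (n - 3) + 2 s.  On the other hand f(u) - 1 counts the v in c with u + (c - v) collinear, and for
   each v there are 2 lam - 1 such u; the sum is thus (n - 3) + 3 (2 lam - 1).
   Comparing gives n + 2 s = 6 lam. *)

Section FiniteSets.
Variable T : finType.
Implicit Types (A X Y Z : {set T}) (C : {set {set T}}).

Lemma card_sep_sum A (p : pred T) : #|[set v in A | p v]| = \sum_(v in A) p v.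
Proof.
rewrite -sum1_card [RHS]big_mkcond [LHS]big_mkcond /=; apply: eq_bigr => v _.
by rewrite inE; case: (v \in A); case: (p v).
Qed.

Lemma card_setD1 A v k : v \in A -> #|A| = k.+1 -> #|A :\ v| = k.
Proof. by move=> vA; rewrite (cardsD1 v A) vA add1n => -[]. Qed.

Lemma subset_card_setD1 Z Y :
  Z \subset Y -> #|Y| = #|Z|.+1 -> exists2 v, v \in Y & Z = Y :\ v.
Proof.
move=> ZY cardY.
have /cards1P[v Dv] : #|Y :\: Z| == 1 by rewrite cardsDS // cardY subSnn.
have : v \in Y :\: Z by rewrite Dv set11.
rewrite inE => /andP[_ vY]; exists v => //.
by rewrite -Dv setDDr setDv set0U; apply/esym/setIidPr.
Qed.

Definition facets_in C Y := [set v in Y | Y :\ v \in C].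

Lemma card_subsets_in C Y k :
  (forall X, X \in C -> #|X| = k) -> #|Y| = k.+1 ->
  #|[set X in C | X \subset Y]| = #|facets_in C Y|.
Proof.
move=> C_card cardY.
have -> : [set X in C | X \subset Y] = [set Y :\ v | v in facets_in C Y].
  apply/setP => X; rewrite inE; apply/andP/imsetP => [[XC XY] | [v]].
    have [|v vY DX] := subset_card_setD1 XY; first by rewrite cardY C_card.
    by exists v => //; rewrite inE vY -DX.
  by rewrite inE => /andP[_ vC] ->; split => //; apply: subD1set.
apply: card_in_imset => v w; rewrite !inE => /andP[vY _] /andP[wY _] Dvw.
apply/eqP; apply: contraT => vw.
have : v \in Y :\ w by rewrite !inE vw.
by rewrite -Dvw setD11.
Qed.

Lemma card_supersets_setU1 X (p : pred {set T}) :
  #|[set Y : {set T} | [&& #|Y| == #|X|.+1, X \subset Y & p Y]]| =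
  #|[set u in ~: X | p (u |: X)]|.
Proof.
have -> : [set Y : {set T} | [&& #|Y| == #|X|.+1, X \subset Y & p Y]] =
          [set u |: X | u in [set u in ~: X | p (u |: X)]].
  apply/setP => Y; rewrite inE; apply/idP/imsetP => [/and3P[/eqP cardY XY pY] | [u]].
    have [u uY DX] := subset_card_setD1 XY cardY.
    have uX : u \notin X by rewrite DX setD11.
    have DY : Y = u |: X by rewrite DX setD1K.
    by exists u; rewrite // !inE uX -DY.
  rewrite !inE => /andP[uX pY] ->.
  have cardY : #|u |: X| = #|X|.+1 by rewrite cardsU1 uX.
  by apply/and3P; split; [exact/eqP | exact: subsetUr |].
apply: card_in_imset => u w; rewrite !inE => /andP[uX _] _ Duw.
have : u \in w |: X by rewrite -Duw setU11.
by case/setU1P => // uX'; rewrite uX' in uX.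
Qed.

Definition extensions C Y := [set u | (u \notin Y) && (u |: Y \in C)].

End FiniteSets.

Section SupersimpleDesign.
Variables (T : finType) (k lam : nat) (B : seq {set T}).
Hypotheses (B_design : two_design k lam B) (B_supersimple : supersimple B).

Lemma disjoint_lines_off_pair (P : {set T}) i j :
  #|P| = 2 -> i < size B -> j < size B -> i != j ->
  P \subset nth set0 B i -> P \subset nth set0 B j ->
  [disjoint nth set0 B i :\: P & nth set0 B j :\: P].
Proof.
move=> cardP iB jB ij Pi Pj; rewrite -setI_eq0.
apply/set0Pn => -[u]; rewrite !inE => /andP[/andP[uP ui] /andP[_ uj]].
have : #|u |: P| <= #|nth set0 B i :&: nth set0 B j|.
  by apply: subset_leq_card; rewrite subUset sub1set inE ui uj subsetI Pi Pj.
by rewrite cardsU1 uP cardP => /leq_trans /(_ (B_supersimple iB jB ij)).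
Qed.

Lemma card_extensions_collinear (P : {set T}) :
  #|P| = 2 -> #|extensions (collinear_triples B) P| = (k - 2) * lam.
Proof.
move: B_design => [B_card B_pairs] cardP.
pose b i := nth set0 B i.
pose F (i : 'I_(size B)) := if P \subset b i then b i :\: P else set0.
have extE : extensions (collinear_triples B) P = \bigcup_i F i.
  apply/setP => u; rewrite !inE cardsU1 cardP.
  apply/idP/bigcupP => [/and3P[uP _ /(has_nthP set0)[i iB uPb]] | [i _]].
    exists (Ordinal iB) => //; move: uPb; rewrite subUset sub1set => /andP[ub Pb].
    by rewrite /F /b /= Pb !inE uP ub.
  rewrite /F; case: ifP => Pb; last by rewrite inE.
  rewrite inE => /andP[uP ub]; rewrite uP add1n eqxx /=; apply/(has_nthP set0).
  by exists i; rewrite ?ltn_ord // subUset sub1set ub.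
have disjF i j : i != j -> [disjoint F i & F j].
  move=> ij; rewrite /F; case: ifP => Pi; last by rewrite -setI_eq0 set0I.
  case: ifP => Pj; last by rewrite -setI_eq0 setI0.
  exact: disjoint_lines_off_pair.
have cardF i : #|F i| = (P \subset b i) * (k - 2).
  rewrite /F; case: ifP => Pb; last by rewrite cards0.
  have /eqP cardb := allP B_card _ (mem_nth set0 (ltn_ord i)).
  by rewrite cardsDS // cardP /b cardb mul1n.
rewrite extE -sum1_card partition_disjoint_bigcup //.
under eq_bigr => i _ do rewrite sum1_card cardF.
rewrite -big_distrl /= mulnC; congr (_ * _).
rewrite -(B_pairs P cardP) -sum1_count (big_nth set0) big_mkord [RHS]big_mkcond.
by apply: eq_bigr => i _; rewrite /b; case: (P \subset _).
Qed.

End SupersimpleDesign.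

Lemma collinear_triple_exists (T : finType) (lam : nat) (B : seq {set T}) :
  two_design 4 lam B -> 0 < lam -> 2 <= #|T| -> exists c, c \in collinear_triples B.
Proof.
move=> [B_card B_pairs] lam_gt0 /card_gt1P[x [y [_ _ xy]]].
have : has (fun b : {set T} => [set x; y] \subset b) B.
  by rewrite has_count B_pairs // cards2 xy.
case/hasP => b bB _.
have cardb : #|b| = 4 by apply/eqP; apply: (allP B_card).
have [v vb] : exists v, v \in b by apply/set0Pn; rewrite -card_gt0 cardb.
exists (b :\ v); rewrite inE; apply/andP; split; first by rewrite (card_setD1 vb cardb).
by apply/hasP; exists b => //; apply: subD1set.
Qed.

Section TwoGraphCount.
Variables (T : finType) (C : {set {set T}}) (lam : nat).
Hypothesis C_card3 : forall X, X \in C -> #|X| = 3.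
Hypothesis C_two_graph :
  forall Y : {set T}, #|Y| = 4 -> #|[set X in C | X \subset Y]| \in [:: 0; 2; 4].
Hypothesis card_extensions : forall P : {set T}, #|P| = 2 -> #|extensions C P| = 2 * lam.

Variable c : {set T}.
Hypothesis cC : c \in C.

Let card_c : #|c| = 3. Proof. exact: C_card3. Qed.

Lemma card_setU1_triple u : u \notin c -> #|u |: c| = 4.
Proof. by move=> uc; rewrite cardsU1 uc card_c. Qed.

Lemma facets_in_setU1 u :
  u \notin c -> facets_in C (u |: c) = u |: [set v in c | u |: (c :\ v) \in C].
Proof.
move=> uc; apply/setP => v; rewrite !inE.
case: (eqVneq v u) => [-> | vu] /=; first by rewrite setU1K.
congr (_ && (_ \in C)); apply/setP => w; rewrite !inE.
by case: (eqVneq w v) => [-> | //]; rewrite (negbTE vu).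
Qed.

Lemma card_facets_in_setU1 u : u \notin c -> #|facets_in C (u |: c)| \in [:: 2; 4].
Proof.
move=> uc; have := C_two_graph (card_setU1_triple uc).
rewrite (card_subsets_in C_card3) ?card_setU1_triple //.
by rewrite facets_in_setU1 // cardsU1 inE (negbTE uc).
Qed.

Lemma coherent_setU1 u : u \notin c -> coherent C (u |: c) = (#|facets_in C (u |: c)| == 4).
Proof.
move=> uc; set Y := u |: c; have cardY : #|Y| = 4 by apply: card_setU1_triple.
have facetsY : facets_in C Y \subset Y by apply/subsetP => v; rewrite inE => /andP[].
have -> : (#|facets_in C Y| == 4) = (facets_in C Y == Y).
  by rewrite eqEcard facetsY cardY eqn_leq -{1}cardY subset_leq_card.
apply/forallP/eqP => [cohY | DY Z].
  apply/eqP; rewrite eqEsubset facetsY; apply/subsetP => v vY.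
  by rewrite inE vY; apply: (implyP (cohY _)); rewrite subD1set (card_setD1 vY cardY).
apply/implyP => /andP[ZY /eqP cardZ].
have [|v vY ->] := subset_card_setD1 ZY; first by rewrite cardY cardZ.
by move: vY; rewrite -{1}DY inE => /andP[].
Qed.

Lemma n_coherent4E : n_coherent4 C c = #|[set u in ~: c | #|facets_in C (u |: c)| == 4]|.
Proof.
rewrite /n_coherent4 -card_c card_supersets_setU1; apply: eq_card => u.
by rewrite !inE; case: (boolP (u \in c)) => //= uc; rewrite coherent_setU1 // card_c.
Qed.

Lemma extensions_setD1 v :
  v \in c -> extensions C (c :\ v) = v |: [set u in ~: c | u |: (c :\ v) \in C].
Proof.
move=> vc; apply/setP => w; rewrite !inE.
by case: (eqVneq w v) => [-> | wv] //=; rewrite setD1K.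
Qed.

Lemma sum_card_facets_in :
  \sum_(u in ~: c) #|facets_in C (u |: c)| + 3 = #|~: c| + 3 * (2 * lam).
Proof.
transitivity (\sum_(u in ~: c) (1 + \sum_(v in c) (u |: (c :\ v) \in C)) + 3).
  congr (_ + _); apply: eq_bigr => u; rewrite inE => uc.
  by rewrite facets_in_setU1 // cardsU1 inE (negbTE uc) card_sep_sum.
rewrite big_split /= sum1_card exchange_big /= -addnA; congr (_ + _).
rewrite -{1}card_c -sum1_card -card_c -sum_nat_const -big_split /=.
apply: eq_bigr => v vc.
have cardP : #|c :\ v| = 2 by rewrite (card_setD1 vc card_c).
by rewrite -(card_extensions cardP) extensions_setD1 // cardsU1 !inE vc card_sep_sum addnC.
Qed.

Lemma card_plus_coherent4 : #|T| + 2 * n_coherent4 C c = 6 * lam.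
Proof.
have sum24 : \sum_(u in ~: c) #|facets_in C (u |: c)| = 2 * #|~: c| + 2 * n_coherent4 C c.
  rewrite n_coherent4E card_sep_sum -sum1_card !big_distrr -big_split /=.
  apply: eq_bigr => u; rewrite inE => uc.
  by have := card_facets_in_setU1 uc; rewrite !inE => /orP[] /eqP ->.
have := sum_card_facets_in; rewrite sum24; have := cardsC c; rewrite card_c.
lia.
Qed.

End TwoGraphCount.

Theorem corollary2p4 (T : finType) (lam : nat) (B : seq {set T}) :
  2 <= #|T| -> 0 < lam ->
  two_design 4 lam B -> supersimple B ->
  regular_two_graph (collinear_triples B) ->
  exists s : nat,
    (forall c, c \in collinear_triples B ->
       n_coherent4 (collinear_triples B) c = s) /\
    #|T| + 2 * s = 6 * lam /\ ~~ odd #|T|.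
Proof.
move=> n_ge2 lam_gt0 B_design B_supersimple [[C_card3 _] C_two_graph].
have count c := card_plus_coherent4 C_card3 C_two_graph
  (card_extensions_collinear B_design B_supersimple) (c := c).
have [c0 c0C] := collinear_triple_exists B_design lam_gt0 n_ge2.
exists (n_coherent4 (collinear_triples B) c0); split.
  by move=> c cC; have := count c cC; have := count c0 c0C; lia.
by have := count c0 c0C; split => //; lia.
Qed.
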